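(* Let $\mathbf v=(v_1,\dots,v_m)$ and $\mathbf k=(k_1,\dots,k_m)$ be $m$-tuples of positive integers with $2\le k_i\le v_i$ for all $i$, and let $v_{\max}=\max_i v_i$ and $k_{\min}=\min_i k_i$. Then $C(\mathbf v,\mathbf k,2)\le C(v_{\max},k_{\min},2)$.
   Context: Let $X_1,\dots,X_m$ be pairwise disjoint sets with $|X_i|=v_i$. A block is an $m$-tuple $(B_1,\dots,B_m)$ with $B_i\subseteq X_i$, $|B_i|=k_i$. An $m$-tuple of sets $(T_1,\dots,T_m)$ is $(\mathbf v,\mathbf k,2)$-admissible if $T_i\subseteq X_i$, $|T_i|\le k_i$ and $\sum|T_i|=2$; it is contained in a block if $T_i\subseteq B_i$ for all $i$. A ${\rm GC}(\mathbf v,\mathbf k,2)$ is a finite family (repetitions allowed) of blocks containing every admissible tuple in at least one block; $C(\mathbf v,\mathbf k,2)$ is the minimum number of blocks. For integers $v\ge k\ge2$, $C(v,k,2)$ is the ordinary covering number: the minimum number of $k$-subsets of a $v$-set such that every $2$-subset is contained in at least one of them. *)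

From mathcomp Require Import all_boot.
Set Implicit Arguments. Unset Strict Implicit. Unset Printing Implicit Defensive.

(* Part i is X_i := 'I_(v i).  A tuple of subsets (T_1,...,T_m) is a dependent
   function T : forall i : 'I_m, {set 'I_(v i)}. *)
Definition mtuple (m : nat) (v : 'I_m -> nat) := forall i : 'I_m, {set 'I_(v i)}.

Definition is_block m (v k : 'I_m -> nat) (B : mtuple v) : Prop :=
  forall i, #|B i| = k i.

Definition admissible2 m (v k : 'I_m -> nat) (T : mtuple v) : Prop :=
  (forall i, #|T i| <= k i) /\ \sum_(i < m) #|T i| = 2.

Definition tuple_in m (v : 'I_m -> nat) (T B : mtuple v) : Prop :=
  forall i, T i \subset B i.

(* A GC(v,k,2) with n blocks: a family F_0..F_(n-1) (repetitions allowed) of blocks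
   containing every admissible tuple in at least one block. *)
Definition is_GC m (v k : 'I_m -> nat) (n : nat) (F : 'I_n -> mtuple v) : Prop :=
  (forall j, is_block k (F j)) /\
  (forall T, admissible2 k T -> exists j, tuple_in T (F j)).

Definition is_GC_number m (v k : 'I_m -> nat) (c : nat) : Prop :=
  (exists F : 'I_c -> mtuple v, is_GC k F) /\
  (forall n (F : 'I_n -> mtuple v), is_GC k F -> c <= n).

Definition is_covering (v k : nat) (F : seq {set 'I_v}) : Prop :=
  (forall B, B \in F -> #|B| = k) /\
  (forall P : {set 'I_v}, #|P| = 2 -> exists2 B, B \in F & P \subset B).

Definition is_covering_number (v k c : nat) : Prop :=
  (exists F : seq {set 'I_v}, is_covering k F /\ size F = c) /\
  (forall F : seq {set 'I_v}, is_covering k F -> c <= size F).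

From mathcomp Require Import all_boot zify.
Set Implicit Arguments. Unset Strict Implicit. Unset Printing Implicit Defensive.

(* Embed every part X_i = 'I_(v i) as an initial segment of the v_max-set.  A
   k_min-subset B of the v_max-set then yields a block by tracing B on each
   part and padding the trace to size k_i.  An admissible tuple T glues to a
   set of at most two points of the v_max-set; padded to a pair, it lies in
   some block B of the covering, and then T lies in the block traced
   from B.  So every covering gives a GC with the same number of blocks. *)

Lemma leq_card_preimset (aT rT : finType) (f : aT -> rT) (B : {set rT}) :
  injective f -> #|f @^-1: B| <= #|B|.
Proof.
move=> inj_f; rewrite -(card_imset _ inj_f); apply: subset_leq_card.
by apply/subsetP => _ /imsetP[x + ->]; rewrite inE.
Qed.

Lemma leq_card_bigcup (I : finType) (T : finType) (A : I -> {set T}) :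
  #|\bigcup_i A i| <= \sum_i #|A i|.
Proof.
elim/big_ind2: _ => [|x1 n1 x2 n2 le1 le2|//]; first by rewrite cards0.
exact: leq_trans (leq_card_setU _ _) (leq_add le1 le2).
Qed.

Lemma bigmin_leq (I : eqType) (r : seq I) (F : I -> nat) x0 i :
  i \in r -> \big[minn/x0]_(j <- r) F j <= F i.
Proof.
elim: r => [//|a r IHr]; rewrite inE big_cons => /orP[/eqP->|/IHr].
  exact: geq_minl.
exact: leq_trans (geq_minr _ _).
Qed.

Section Padding.

Variable T : finType.

Definition pad (A : {set T}) n : {set T} :=
  A :|: [set x in take (n - #|A|) (enum (~: A))].

Lemma subset_pad (A : {set T}) n : A \subset pad A n.
Proof. exact: subsetUl. Qed.

Lemma card_pad (A : {set T}) n : #|A| <= n -> n <= #|T| -> #|pad A n| = n.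
Proof.
move=> leAn lenT; rewrite /pad cardsU.
set S := [set x in _].
have disjAS : A :&: S = set0.
  apply/setP => x; rewrite !inE; apply/andP => -[xA /mem_take].
  by rewrite mem_enum inE xA.
have cardS : #|S| = n - #|A|.
  rewrite cardsE (card_uniqP _) ?take_uniq ?enum_uniq // size_takel //.
  by rewrite -cardE; have := cardsC A; lia.
by rewrite disjAS cards0 cardS; lia.
Qed.

End Padding.

Section CoveringToGC.

Variables (m w kk : nat) (v k : 'I_m -> nat).
Hypotheses (le_v_w : forall i, v i <= w) (le_k_v : forall i, k i <= v i)
  (le_kk_k : forall i, kk <= k i).

Definition embed i : 'I_(v i) -> 'I_w := widen_ord (le_v_w i).
Arguments embed : clear implicits.

Lemma embed_inj i : injective (embed i).
Proof. by move=> x y /(congr1 val) /= /val_inj. Qed.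

Definition trace_block (B : {set 'I_w}) : mtuple v :=
  fun i => pad (embed i @^-1: B) (k i).

Definition glue (T : mtuple v) : {set 'I_w} := \bigcup_i embed i @: T i.

Lemma subset_trace_block (B : {set 'I_w}) i :
  embed i @^-1: B \subset trace_block B i.
Proof. exact: subset_pad. Qed.

Lemma is_block_trace (B : {set 'I_w}) :
  #|B| = kk -> is_block k (trace_block B).
Proof.
move=> cardB i; apply: card_pad; last by rewrite card_ord.
by rewrite (leq_trans (leq_card_preimset _ (@embed_inj i))) ?cardB.
Qed.

Lemma card_glue (T : mtuple v) : #|glue T| <= \sum_i #|T i|.
Proof.
apply: leq_trans (leq_card_bigcup _) _.
by apply: leq_sum => i _; apply: leq_imset_card.
Qed.

Lemma tuple_in_trace (T : mtuple v) (B : {set 'I_w}) :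
  glue T \subset B -> tuple_in T (trace_block B).
Proof.
move=> sTB i; apply: subset_trans (subset_trace_block B i).
apply/subsetP => x Tx; rewrite inE (subsetP sTB) //.
by apply/bigcupP; exists i; rewrite ?imset_f.
Qed.

Lemma GC_of_covering (C : seq {set 'I_w}) :
  1 < w -> is_covering kk C -> exists F : 'I_(size C) -> mtuple v, is_GC k F.
Proof.
move=> w_gt1 [cardC coverC].
exists (fun j => trace_block (nth set0 C j)); split.
  by move=> j; apply/is_block_trace/cardC/mem_nth.
move=> T [_ sumT].
have card_pair : #|pad (glue T) 2| = 2.
  by rewrite card_pad ?card_ord // -sumT card_glue.
have [B BC sPB] := coverC _ card_pair.
have ltBC : index B C < size C by rewrite index_mem.
exists (Ordinal ltBC); rewrite /= nth_index //; apply: tuple_in_trace.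
exact: subset_trans (subset_pad _ _) sPB.
Qed.

End CoveringToGC.

Theorem theorem3p18 (m : nat) (v k : 'I_m -> nat) (m_gt0 : 0 < m)
  (hk : forall i, 2 <= k i) (hkv : forall i, k i <= v i)
  (cGC cC : nat) :
  let vmax := \max_(i < m) v i in
  let kmin := \big[minn/k (Ordinal m_gt0)]_(i < m) k i in
  @is_GC_number m v k cGC -> is_covering_number vmax kmin cC -> cGC <= cC.
Proof.
move=> vmax kmin [_ GC_min] [[C [covC <-]] _].
have le_v_vmax i : v i <= vmax by apply: leq_bigmax.
have le_kmin_k i : kmin <= k i by apply: bigmin_leq; rewrite mem_index_enum.
have vmax_gt1 : 1 < vmax.
  exact: leq_trans (hk (Ordinal m_gt0)) (leq_trans (hkv _) (le_v_vmax _)).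
have [F GC_F] := GC_of_covering le_v_vmax hkv le_kmin_k vmax_gt1 covC.
exact: GC_min _ F GC_F.
Qed.
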